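(* Let $\mathcal{B}$ be a real Banach space whose dual space $\mathcal{B}^*$ is smooth, let $\nu_j\in\mathcal{B}^*$, $j\in\mathbb{N}_m$, be linearly independent and let $\mathbf{y}\in\mathbb{R}^m$. Then $\hat f\in\mathcal{B}$ is a solution of the minimum norm interpolation problem with data $\mathbf{y}$ if and only if $\hat f\in\mathcal{M}_{\mathbf{y}}$ and there exist $c_j\in\mathbb{R}$, $j\in\mathbb{N}_m$, such that $$\hat f=\rho\,\mathcal{G}^*\Big(\sum_{j\in\mathbb{N}_m}c_j\nu_j\Big),\qquad \rho:=\Big\|\sum_{j\in\mathbb{N}_m}c_j\nu_j\Big\|_{\mathcal{B}^*},$$ where $\hat f$ is identified with its canonical image in $\mathcal{B}^{**}$.
   Context: $\mathcal{B}$ is a real Banach space with dual $\mathcal{B}^*$ and pairing $\langle\nu,f\rangle_{\mathcal{B}}:=\nu(f)$; $\mathbb{N}_m:=\{1,\dots,m\}$; $\mathcal{L}(f):=[\langle\nu_j,f\rangle_{\mathcal{B}}:j\in\mathbb{N}_m]$, $\mathcal{M}_{\mathbf{y}}:=\{f\in\mathcal{B}:\mathcal{L}(f)=\mathbf{y}\}$; a solution of the minimum norm interpolation problem with data $\mathbf{y}$ is an $\hat f\in\mathcal{M}_{\mathbf{y}}$ with $\|\hat f\|_{\mathcal{B}}=\inf\{\|f\|_{\mathcal{B}}:f\in\mathcal{M}_{\mathbf{y}}\}$. A normed space $X$ is smooth if its norm is Gâteaux differentiable at every $x\neq0$, i.e. $\lim_{t\to0}(\|x+th\|-\|x\|)/t$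 exists for all $h$; the Gâteaux derivative is the functional in $X^*$ given by this limit. $\mathcal{G}^*(\nu)\in\mathcal{B}^{**}$ denotes the Gâteaux derivative of $\|\cdot\|_{\mathcal{B}^*}$ at $\nu\neq0$, and $\mathcal{G}^*(0):=0$. *)

From HB Require Import structures.
From mathcomp Require Import all_boot all_order all_algebra.
From mathcomp Require Import all_classical all_reals all_analysis.
Set Implicit Arguments. Unset Strict Implicit. Unset Printing Implicit Defensive.
Import Order.TTheory GRing.Theory Num.Theory.
Import numFieldNormedType.Exports.
Local Open Scope classical_set_scope.
Local Open Scope ring_scope.

Definition is_dual (R : realType) (V : normedModType R) (nu : V -> R) : Prop :=
  (forall (a : R) (f g : V), nu (a *: f + g) = a * nu f + nu g) /\ continuous nu.

Definition dnorm (R : realType) (V : normedModType R) (nu : V -> R) : R :=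
  sup [set `|nu f| | f in [set f : V | `|f| <= 1]].

Definition dquot (R : realType) (V : normedModType R) (nu h : V -> R) (t : R) : R :=
  (dnorm (fun f => nu f + t * h f) - dnorm nu) / t.

Definition dual_smooth (R : realType) (V : normedModType R) : Prop :=
  forall nu : V -> R, is_dual nu -> nu <> (fun=> 0) ->
  forall h : V -> R, is_dual h -> cvg (dquot nu h @ (0 : R)^').

(* Gateaux derivative of the dual norm at nu, as an element of the bidual
   (a functional on the dual); its value at nu = 0 is 0 by convention *)
Definition gateaux_dual (R : realType) (V : normedModType R) (nu : V -> R)
  : (V -> R) -> R :=
  fun h => if pselect (nu = fun=> 0) then 0 else lim (dquot nu h @ (0 : R)^').

Definition lincomb (R : realType) (V : normedModType R) (m : nat)
  (c : 'I_m -> R) (nu : 'I_m -> V -> R) : V -> R :=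
  fun f => \sum_(j < m) c j * nu j f.

Definition lin_indep (R : realType) (V : normedModType R) (m : nat)
  (nu : 'I_m -> V -> R) : Prop :=
  forall c : 'I_m -> R, lincomb c nu = (fun=> 0) -> forall j, c j = 0.

Definition interp_set (R : realType) (V : normedModType R) (m : nat)
  (nu : 'I_m -> V -> R) (y : 'I_m -> R) : set V :=
  [set f | forall j, nu j f = y j].

Definition is_min_norm_interp (R : realType) (V : normedModType R) (m : nat)
  (nu : 'I_m -> V -> R) (y : 'I_m -> R) (fhat : V) : Prop :=
  interp_set nu y fhat /\
  `|fhat| = inf [set `|f| | f in interp_set nu y].

(* Necessity.  If [fhat] is a minimum norm interpolant, then [|fhat|] is the
   distance from [fhat] to the common kernel [K] of the [nu j].  The
   Hahn-Banach theorem (proved below from Zorn's lemma, in dominated form)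
   applied to this quotient seminorm gives a functional [mu] with [|mu| <= 1],
   [mu fhat = |fhat|] and [mu = 0] on [K]; by finite-dimensional linear algebra
   [mu] is a combination of the [nu j].  For [nu' := |fhat| mu] we have
   [nu' fhat = dnorm nu' * |fhat|], and comparing one-sided difference quotients
   shows [gateaux_dual nu' lambda = lambda fhat / |fhat|], which is the claimed
   representation with [rho = dnorm nu' = |fhat|].

   Sufficiency.  With [nuc = sum c_j nu_j] and [rho = dnorm nuc], the
   representation evaluated at [nuc] gives [nuc fhat = rho^2]
   ([gateaux_dual nuc nuc = rho]), and at a functional norming [fhat] gives
   [|fhat| <= rho] ([|gateaux_dual nuc lambda| <= dnorm lambda]).  Every
   interpolant [f] has [nuc f = nuc fhat], so [rho^2 <= rho |f|], whence
   [|fhat| <= |f|]. *)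

From HB Require Import structures.
From mathcomp Require Import all_boot all_order all_algebra.
From mathcomp Require Import all_classical all_reals all_analysis.
From mathcomp Require Import ring lra.
Set Implicit Arguments. Unset Strict Implicit. Unset Printing Implicit Defensive.
Import Order.TTheory GRing.Theory Num.Theory.
Import numFieldNormedType.Exports.
Local Open Scope classical_set_scope.
Local Open Scope ring_scope.

Section Sublinear.
Variables (R : realType) (V : lmodType R).

Definition linear_functional (mu : V -> R) : Prop :=
  forall a f g, mu (a *: f + g) = a * mu f + mu g.

Section LinearFunctional.
Variable mu : V -> R.
Hypothesis mu_lin : linear_functional mu.

Lemma lfun0 : mu 0 = 0.
Proof. by have := mu_lin 1 0 0; rewrite scale1r addr0 mul1r; lra. Qed.

Lemma lfunZ a f : mu (a *: f) = a * mu f.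
Proof. by have := mu_lin a f 0; rewrite addr0 lfun0 addr0. Qed.

Lemma lfunD f g : mu (f + g) = mu f + mu g.
Proof. by have := mu_lin 1 f g; rewrite scale1r mul1r. Qed.

Lemma lfunN f : mu (- f) = - mu f.
Proof. by rewrite -scaleN1r lfunZ mulN1r. Qed.

Lemma lfunB f g : mu (f - g) = mu f - mu g.
Proof. by rewrite lfunD lfunN. Qed.

End LinearFunctional.

Definition sublinear (q : V -> R) : Prop :=
  (forall x y, q (x + y) <= q x + q y) /\
  (forall a x, 0 < a -> q (a *: x) = a * q x).

Section SublinearFunctional.
Variable q : V -> R.
Hypothesis q_sub : sublinear q.

Lemma sublinear0 : q 0 = 0.
Proof. by have := q_sub.2 2 0 (ltr0Sn _ 1); rewrite scaler0; lra. Qed.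

Lemma sublinearN x : - q (- x) <= q x.
Proof. by have := q_sub.1 x (- x); rewrite subrr sublinear0; lra. Qed.

Lemma sublinear_ge0Z t x : 0 <= t -> q (t *: x) = t * q x.
Proof.
rewrite le_eqVlt => /orP[/eqP <-|t_gt0]; last exact: q_sub.2.
by rewrite scale0r mul0r sublinear0.
Qed.

Lemma sublinear_linear : (forall y, q (- y) <= - q y) -> linear_functional q.
Proof.
move=> qN_le.
have qN y : q (- y) = - q y.
  by apply/eqP; rewrite eq_le qN_le /=; have := sublinearN y; lra.
have qD x y : q (x + y) = q x + q y.
  apply/eqP; rewrite eq_le q_sub.1 /=.
  by have := q_sub.1 (x + y) (- y); rewrite addrK qN; lra.
move=> a f g; rewrite qD; congr (_ + _).
have [a_ge0|a_lt0] := leP 0 a; first by rewrite sublinear_ge0Z.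
rewrite -[a]opprK scaleNr qN sublinear_ge0Z ?oppr_ge0 ?ltW //; lra.
Qed.

End SublinearFunctional.

(* Given a sublinear [q] and a convex cone [C] of pairs [(z, s)] with
   [s <= q z], the functional [cone_inf q C x = inf_{(z,s) in C} q (x + z) - s]
   is again sublinear, lies below [q], and satisfies [p (- z) <= - s] on [C].
   It serves both to make a dominated functional linear in a given direction
   (inside Hahn-Banach) and, for [C = kernel x {0}], as the quotient seminorm. *)
Section ConeInf.
Variables (q : V -> R) (C : set (V * R)).
Hypotheses (q_sub : sublinear q) (C0 : C (0, 0))
  (CD : forall z1 s1 z2 s2, C (z1, s1) -> C (z2, s2) -> C (z1 + z2, s1 + s2))
  (CZ : forall a z s, 0 < a -> C (z, s) -> C (a *: z, a * s))
  (C_le : forall z s, C (z, s) -> s <= q z).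

Definition cone_inf (x : V) : R := inf [set q (x + p.1) - p.2 | p in C].

Lemma cone_inf_le x z s : C (z, s) -> cone_inf x <= q (x + z) - s.
Proof.
move=> Czs; apply: ge_inf; last by exists (z, s).
exists (- q (- x)) => _ [[z' s'] Cp' <-] /=.
have := C_le Cp'; have := q_sub.1 (x + z') (- x).
rewrite addrC addKr; lra.
Qed.

Lemma cone_inf_ge x b :
  (forall z s, C (z, s) -> b <= q (x + z) - s) -> b <= cone_inf x.
Proof.
move=> hb; apply: lb_le_inf; first by exists (q (x + 0) - 0); exists (0, 0).
by move=> _ [[z s] Czs <-]; exact: hb.
Qed.

Lemma cone_inf_le_q x : cone_inf x <= q x.
Proof. by have := cone_inf_le x C0; rewrite addr0 subr0. Qed.

Lemma cone_inf_opp z s : C (z, s) -> cone_inf (- z) <= - s.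
Proof.
by move=> Czs; have := cone_inf_le (- z) Czs; rewrite addNr sublinear0 // sub0r.
Qed.

Lemma cone_inf_sublinear : sublinear cone_inf.
Proof.
split.
- move=> x y; suff : cone_inf (x + y) - cone_inf y <= cone_inf x by lra.
  apply: cone_inf_ge => z1 s1 C1.
  suff : cone_inf (x + y) - (q (x + z1) - s1) <= cone_inf y by lra.
  apply: cone_inf_ge => z2 s2 C2.
  have := cone_inf_le (x + y) (CD C1 C2).
  have := q_sub.1 (x + z1) (y + z2).
  rewrite [x + y + _]addrACA; lra.
- move=> a x a_gt0; apply/eqP; rewrite eq_le; apply/andP; split.
  + rewrite -ler_pdivrMl //; apply: cone_inf_ge => z s Czs.
    rewrite ler_pdivrMl //.
    have := cone_inf_le (a *: x) (CZ a_gt0 Czs).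
    by rewrite -scalerDr q_sub.2 //; lra.
  + apply: cone_inf_ge => z s Czs.
    have ainv_gt0 : 0 < a^-1 by rewrite invr_gt0.
    have := cone_inf_le x (CZ ainv_gt0 Czs).
    have -> : x + a^-1 *: z = a^-1 *: (a *: x + z).
      by rewrite scalerDr scalerA mulVf ?scale1r // gt_eqF.
    rewrite q_sub.2 // => /(ler_wpM2l (ltW a_gt0)).
    by rewrite mulrBr !mulrA divff ?gt_eqF // !mul1r.
Qed.

End ConeInf.

Definition fun_le (r q : V -> R) : Prop := forall x, r x <= q x.

Definition ray (q : V -> R) (y : V) : set (V * R) :=
  [set zs | exists2 t, 0 <= t & zs = (t *: y, t * q y)].

Lemma cone_inf_ray q y : sublinear q ->
  [/\ sublinear (cone_inf q (ray q y)), fun_le (cone_inf q (ray q y)) q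
    & cone_inf q (ray q y) (- y) <= - q y].
Proof.
move=> q_sub.
have C0 : ray q y (0, 0) by exists 0; rewrite ?scale0r ?mul0r.
have CD z1 s1 z2 s2 : ray q y (z1, s1) -> ray q y (z2, s2) ->
    ray q y (z1 + z2, s1 + s2).
  move=> [t1 t1_ge0 [-> ->]] [t2 t2_ge0 [-> ->]].
  by exists (t1 + t2); rewrite ?addr_ge0 // scalerDl mulrDl.
have CZ a z s : 0 < a -> ray q y (z, s) -> ray q y (a *: z, a * s).
  move=> a_gt0 [t t_ge0 [-> ->]]; exists (a * t); last by rewrite scalerA mulrA.
  by rewrite mulr_ge0 // ltW.
have C_le z s : ray q y (z, s) -> s <= q z.
  by move=> [t t_ge0 [-> ->]]; rewrite sublinear_ge0Z.
split; first exact: cone_inf_sublinear.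
- by move=> x; apply: cone_inf_le_q.
- by apply: cone_inf_opp => //; exists 1; rewrite ?scale1r ?mul1r.
Qed.

Lemma chain_inf_sublinear (q0 : V -> R) (A : set (V -> R)) :
  sublinear q0 -> (forall q, A q -> sublinear q /\ fun_le q q0) ->
  total_on A fun_le -> A !=set0 ->
  let r x := inf [set q x | q in A] in
  sublinear r /\ forall q, A q -> fun_le r q.
Proof.
move=> q0_sub A_sub A_tot [a Aa] r.
have r_le q x : A q -> r x <= q x.
  move=> Aq; apply: ge_inf; last by exists q.
  exists (- q0 (- x)) => _ [q' Aq' <-].
  have [q'_sub q'_le] := A_sub _ Aq'.
  by have := sublinearN q'_sub x; have := q'_le (- x); lra.
have r_ge x b : (forall q, A q -> b <= q x) -> b <= r x.
  move=> hb; apply: lb_le_inf; first by exists (a x), a.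
  by move=> _ [q Aq <-]; exact: hb.
split; last by move=> q Aq x; exact: (r_le).
split.
- move=> x y; suff : r (x + y) - r y <= r x by lra.
  apply: (r_ge) => q1 A1; suff : r (x + y) - q1 x <= r y by lra.
  apply: (r_ge) => q2 A2.
  have [q1_sub _] := A_sub _ A1; have [q2_sub _] := A_sub _ A2.
  have [q12|q21] := A_tot _ _ A1 A2.
  + by have := r_le _ (x + y) A1; have := q1_sub.1 x y; have := q12 y; lra.
  + by have := r_le _ (x + y) A2; have := q2_sub.1 x y; have := q21 x; lra.
- move=> c x c_gt0; apply/eqP; rewrite eq_le; apply/andP; split.
  + rewrite -ler_pdivrMl //; apply: (r_ge) => q Aq.
    by rewrite ler_pdivrMl // -(A_sub _ Aq).1.2 //; exact: (r_le).
  + apply: (r_ge) => q Aq; rewrite (A_sub _ Aq).1.2 // ler_pM2l //.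
    exact: (r_le).
Qed.

Lemma minimal_sublinear (q0 : V -> R) : sublinear q0 ->
  exists q, [/\ sublinear q, fun_le q q0 &
    forall r, sublinear r -> fun_le r q -> fun_le q r].
Proof.
move=> q0_sub.
pose T := {q : V -> R | sublinear q /\ fun_le q q0}.
pose le_T (a b : T) : bool := `[< fun_le (sval b) (sval a) >].
have t0 : T by exists q0; split => // x.
have [[q [q_sub q_le]] q_max] : exists t, premaximal le_T t.
  apply: (ZL_preorder t0).
  - by move=> a; apply/asboolP => x.
  - move=> a b c /asboolP hab /asboolP hbc; apply/asboolP => x.
    exact: le_trans (hbc x) (hab x).
  move=> A A_tot.
  have [[a Aa]|A0] := pselect (exists a, A a); last first.
    by exists t0 => s As; exfalso; apply: A0; exists s.
  pose B := [set sval t | t in A].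
  have B_sub q : B q -> sublinear q /\ fun_le q q0.
    by move=> [t _ <-]; exact: (svalP t).
  have B_tot : total_on B fun_le.
    move=> _ _ [s As <-] [t At <-].
    by have [/asboolP|/asboolP] := A_tot _ _ As At; [right|left].
  have Ba : B (sval a) by exists a.
  have [r_sub r_le] := chain_inf_sublinear q0_sub B_sub B_tot (ex_intro _ _ Ba).
  have r_q0 : fun_le (fun x => inf [set q x | q in B]) q0.
    by move=> x; apply: le_trans (r_le _ Ba x) ((svalP a).2 x).
  exists (exist _ (fun x => inf [set q x | q in B]) (conj r_sub r_q0) : T).
  by move=> t At; apply/asboolP => x; apply: r_le; exists t.
exists q; split => // r r_sub r_le.
have r_q0 : fun_le r q0 by move=> x; exact: le_trans (r_le x) (q_le x).
by have /asboolP := q_max (exist _ r (conj r_sub r_q0) : T) (asboolT r_le).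
Qed.

(* A minimal sublinear functional is linear: comparing it with
   [cone_inf q (ray q y)] gives [q (- y) <= - q y] for every [y]. *)
Lemma minimal_sublinear_linear (q : V -> R) : sublinear q ->
  (forall r, sublinear r -> fun_le r q -> fun_le q r) -> linear_functional q.
Proof.
move=> q_sub q_min; apply: sublinear_linear => // y.
have [r_sub r_le r_opp] := cone_inf_ray y q_sub.
exact: le_trans (q_min _ r_sub r_le (- y)) r_opp.
Qed.

Theorem hahn_banach (p : V -> R) (x0 : V) : sublinear p ->
  exists mu : V -> R, [/\ linear_functional mu, fun_le mu p & mu x0 = p x0].
Proof.
move=> p_sub; have [q0_sub q0_le q0_opp] := cone_inf_ray x0 p_sub.
have [mu [mu_sub mu_le mu_min]] := minimal_sublinear q0_sub.
have mu_lin := minimal_sublinear_linear mu_sub mu_min.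
have mu_p : fun_le mu p by move=> x; exact: le_trans (mu_le x) (q0_le x).
exists mu; split => //; apply/eqP; rewrite eq_le mu_p /=.
by have := le_trans (mu_le (- x0)) q0_opp; rewrite lfunN //; lra.
Qed.

End Sublinear.

Section CommonKernel.
Variables (R : realType) (V : lmodType R).

Lemma lift_ord_max m (k : 'I_m) : lift ord_max k = widen_ord (leqnSn m) k.
Proof. exact/val_inj/lift_max. Qed.

Definition extend_coef m (c : 'I_m -> R) (l : R) (j : 'I_m.+1) : R :=
  oapp c l (unlift ord_max j).

Lemma sum_extend_coef m (c : 'I_m -> R) l (F : 'I_m.+1 -> R) :
  \sum_(j < m.+1) extend_coef c l j * F j =
  \sum_(j < m) c j * F (widen_ord (leqnSn m) j) + l * F ord_max.
Proof.
rewrite big_ord_recr /= /extend_coef unlift_none; congr (_ + _).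
by apply: eq_bigr => k _; rewrite -lift_ord_max liftK.
Qed.

(* Induction on their number:
   either the last one vanishes on the kernel of the others, or it can be
   normalized to 1 at some [x0] in that kernel and subtracted off. *)
Lemma common_kernel_span m (nu : 'I_m -> V -> R) (mu : V -> R) :
  (forall j, linear_functional (nu j)) -> linear_functional mu ->
  (forall f, (forall j, nu j f = 0) -> mu f = 0) ->
  exists c : 'I_m -> R, forall f, mu f = \sum_(j < m) c j * nu j f.
Proof.
elim: m nu mu => [|m IH] nu mu nu_lin mu_lin mu_ker.
  by exists (fun=> 0) => f; rewrite big_ord0; apply: mu_ker => -[].
pose nu' k := nu (widen_ord (leqnSn m) k); pose nl := nu ord_max.
have nu'_lin k : linear_functional (nu' k) by exact: nu_lin.
have ker_split g : (forall k, nu' k g = 0) -> nl g = 0 -> forall j, nu j g = 0.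
  move=> nu'g nlg j; case: (unliftP ord_max j) => [k ->|->] //.
  by rewrite lift_ord_max; exact: nu'g.
have [nl_dep|] := pselect (forall f, (forall k, nu' k f = 0) -> nl f = 0).
  have [c' c'E] := IH nu' mu nu'_lin mu_lin
    (fun f nu'f => mu_ker f (ker_split f nu'f (nl_dep f nu'f))).
  by exists (extend_coef c' 0) => f; rewrite sum_extend_coef mul0r addr0.
move=> /existsNP [f0 /not_implyP [nu'f0 /eqP nlf0]].
have nl_lin : linear_functional nl by exact: nu_lin.
pose x0 := (nl f0)^-1 *: f0.
have nlx0 : nl x0 = 1 by rewrite lfunZ // mulVf.
have nu'x0 k : nu' k x0 = 0 by rewrite lfunZ // nu'f0 mulr0.
pose mu' f := mu f - mu x0 * nl f.
have mu'_lin : linear_functional mu'.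
  by move=> a f g; rewrite /mu' mu_lin nl_lin; ring.
have mu'_ker f : (forall k, nu' k f = 0) -> mu' f = 0.
  move=> nu'f; have : mu (f - nl f *: x0) = 0.
    apply: mu_ker; apply: ker_split => [k|].
      by rewrite lfunB // lfunZ // nu'f nu'x0 mulr0 subr0.
    by rewrite lfunB // lfunZ // nlx0 mulr1 subrr.
  by rewrite lfunB // lfunZ // /mu'; lra.
have [c' c'E] := IH nu' mu' nu'_lin mu'_lin mu'_ker.
exists (extend_coef c' (mu x0)) => f; rewrite sum_extend_coef -c'E /mu' /nl; ring.
Qed.

End CommonKernel.

Section DualNorm.
Variables (R : realType) (V : normedModType R).

Definition bounded_lfun (nu : V -> R) : Prop :=
  linear_functional nu /\ exists M, forall f, `|nu f| <= M * `|f|.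

Lemma is_dualP (nu : V -> R) : is_dual nu <-> bounded_lfun nu.
Proof.
split=> [[nu_lin nu_cont]|[nu_lin [M nuM]]]; split => //; last first.
  move=> x; have M1_gt0 : 0 < `|M| + 1 by rewrite ltr_wpDl.
  apply/(@cvgrPdist_lt _ _ _ (nbhs x)) => e e_gt0; near=> z.
  rewrite -lfunB //; apply: le_lt_trans (nuM _) _.
  apply: (@le_lt_trans _ _ ((`|M| + 1) * `|x - z|)).
    by rewrite ler_wpM2r // (le_trans (ler_norm M)) ?lerDl.
  rewrite -ltr_pdivlMl //; near: z.
  by apply: cvgr_dist_lt => //; rewrite mulr_gt0 // invr_gt0.
have /nbhs_norm0P [e /= e_gt0 nu_small] :
    \forall z \near 0, `|nu 0 - nu z| < 1.
  exact: cvgr_dist_lt (nu_cont 0) _ ltr01.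
exists (2 / e) => f; have [->|f_neq0] := eqVneq f 0.
  by rewrite lfun0 // !normr0 mulr0.
have f_gt0 : 0 < `|f| by rewrite normr_gt0.
have k_gt0 : 0 < e / (2 * `|f|) by rewrite divr_gt0 ?mulr_gt0.
pose u := (e / (2 * `|f|)) *: f.
have u_small : `|u| < e.
  rewrite /u normrZ ger0_norm ?ltW //.
  have -> : e / (2 * `|f|) * `|f| = e / 2 by field; rewrite gt_eqF.
  lra.
have := nu_small u u_small; rewrite /= lfun0 // sub0r normrN.
rewrite /u lfunZ // normrM gtr0_norm // => nu_u.
rewrite -(ler_pM2l k_gt0) (le_trans (ltW nu_u)) //.
have -> : e / (2 * `|f|) * (2 / e * `|f|) = 1 by field; rewrite !gt_eqF.
by [].
Unshelve. all: by end_near. Qed.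


Lemma bounded_comb (nu mu : V -> R) (a b : R) : bounded_lfun nu ->
  bounded_lfun mu -> bounded_lfun (fun f => a * nu f + b * mu f).
Proof.
move=> [nu_lin [M nuM]] [mu_lin [N muN]]; split.
  by move=> c f g; rewrite nu_lin mu_lin; ring.
exists (`|a| * `|M| + `|b| * `|N|) => f.
apply: le_trans (ler_normD _ _) _; rewrite !normrM mulrDl.
apply: lerD; rewrite -mulrA ler_wpM2l //.
  by apply: le_trans (nuM f) _; rewrite ler_wpM2r // ler_norm.
by apply: le_trans (muN f) _; rewrite ler_wpM2r // ler_norm.
Qed.

Lemma bounded_scale (nu : V -> R) (a : R) :
  bounded_lfun nu -> bounded_lfun (fun f => a * nu f).
Proof.
move=> nu_bd; have := bounded_comb a 0 nu_bd nu_bd.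
by congr bounded_lfun; apply: funext => f; rewrite mul0r addr0.
Qed.

Lemma bounded_shift (nu mu : V -> R) (t : R) : bounded_lfun nu ->
  bounded_lfun mu -> bounded_lfun (fun f => nu f + t * mu f).
Proof.
move=> nu_bd mu_bd; have := bounded_comb 1 t nu_bd mu_bd.
by congr bounded_lfun; apply: funext => f; rewrite mul1r.
Qed.

Lemma bounded_lincomb m (c : 'I_m -> R) (nu : 'I_m -> V -> R) :
  (forall j, bounded_lfun (nu j)) -> bounded_lfun (lincomb c nu).
Proof.
elim: m c nu => [|m IH] c nu nu_bd.
  have -> : lincomb c nu = fun=> 0 by apply: funext => f; rewrite /lincomb big_ord0.
  by split; [move=> *; rewrite mulr0 addr0 | exists 0 => f; rewrite normr0 mul0r].
have -> : lincomb c nu = fun f =>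
    1 * lincomb (fun k => c (widen_ord (leqnSn m) k))
                (fun k => nu (widen_ord (leqnSn m) k)) f + c ord_max * nu ord_max f.
  by apply: funext => f; rewrite /lincomb big_ord_recr mul1r.
by apply: bounded_comb => //; exact: IH.
Qed.

Lemma dual_norm_le (nu : V -> R) M : 0 <= M -> (forall f, `|nu f| <= M * `|f|) ->
  dnorm nu <= M.
Proof.
move=> M_ge0 nuM; apply: ge_sup; first by exists `|nu 0|, 0; rewrite //= normr0.
by move=> _ [g /= g1 <-]; apply: le_trans (nuM g) _; rewrite ler_piMr.
Qed.

(* The dual norm is nonnegative (it is [0] when the supremum does not exist). *)
Lemma dual_norm_ge0 (nu : V -> R) : 0 <= dnorm nu.
Proof.
rewrite /dnorm.
have [nu_sup|/sup_out ->] //:=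
  pselect (has_sup [set `|nu f| | f in [set f : V | `|f| <= 1]]).
apply: le_trans (normr_ge0 (nu 0)) _; apply: sup_upper_bound => //.
by exists 0; rewrite //= normr0.
Qed.

Lemma dual_norm_has_sup (nu : V -> R) : bounded_lfun nu ->
  has_sup [set `|nu f| | f in [set f : V | `|f| <= 1]].
Proof.
move=> [_ [M nuM]]; split; first by exists `|nu 0|, 0; rewrite //= normr0.
exists `|M| => _ [g /= g1 <-]; apply: le_trans (nuM g) _.
by apply: le_trans (ler_wpM2r (normr_ge0 _) (ler_norm M)) _; rewrite ler_piMr.
Qed.

Lemma dual_norm_ub (nu : V -> R) f : bounded_lfun nu -> `|nu f| <= dnorm nu * `|f|.
Proof.
move=> nu_bd; have nu_lin := nu_bd.1; have [->|f_neq0] := eqVneq f 0.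
  by rewrite lfun0 // !normr0 mulr0.
have f_gt0 : 0 < `|f| by rewrite normr_gt0.
have : `|nu (`|f|^-1 *: f)| <= dnorm nu.
  apply: sup_upper_bound; first exact: dual_norm_has_sup.
  by exists (`|f|^-1 *: f); rewrite //= normrZ normfV normr_id mulVf ?gt_eqF.
rewrite lfunZ // normrM normfV normr_id -(ler_pM2l f_gt0) mulrA divff ?gt_eqF //.
by rewrite mul1r mulrC.
Qed.

Lemma dual_norm_scale (nu : V -> R) (a : R) : bounded_lfun nu ->
  dnorm (fun f => a * nu f) = `|a| * dnorm nu.
Proof.
move=> nu_bd; apply/eqP; rewrite eq_le; apply/andP; split.
  apply: dual_norm_le; first by rewrite mulr_ge0 ?dual_norm_ge0.
  by move=> f; rewrite normrM -mulrA ler_wpM2l // dual_norm_ub.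
have [->|a_neq0] := eqVneq a 0.
  by rewrite normr0 mul0r dual_norm_ge0.
have a_gt0 : 0 < `|a| by rewrite normr_gt0.
rewrite -ler_pdivlMl //; apply: dual_norm_le.
  by rewrite mulr_ge0 ?invr_ge0 ?dual_norm_ge0.
move=> f; rewrite -mulrA ler_pdivlMl //.
by have := dual_norm_ub f (bounded_scale a nu_bd); rewrite normrM.
Qed.

Lemma dual_norm_lipschitz (nu mu : V -> R) (t : R) :
  bounded_lfun nu -> bounded_lfun mu ->
  `|dnorm (fun f => nu f + t * mu f) - dnorm nu| <= `|t| * dnorm mu.
Proof.
move=> nu_bd mu_bd; have shift_bd := bounded_shift t nu_bd mu_bd.
have tmu f : `|t * mu f| <= `|t| * dnorm mu * `|f|.
  by rewrite normrM -mulrA ler_wpM2l ?dual_norm_ub.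
rewrite ler_norml; apply/andP; split.
- suff : dnorm nu <= dnorm (fun f => nu f + t * mu f) + `|t| * dnorm mu by lra.
  apply: dual_norm_le => [|f]; first by rewrite addr_ge0 ?mulr_ge0 ?dual_norm_ge0.
  have -> : nu f = (nu f + t * mu f) - t * mu f by ring.
  apply: le_trans (ler_normB _ _) _; rewrite mulrDl.
  by apply: lerD; [exact: dual_norm_ub | exact: tmu].
- suff : dnorm (fun f => nu f + t * mu f) <= dnorm nu + `|t| * dnorm mu by lra.
  apply: dual_norm_le => [|f]; first by rewrite addr_ge0 ?mulr_ge0 ?dual_norm_ge0.
  apply: le_trans (ler_normD _ _) _; rewrite mulrDl.
  by apply: lerD; [exact: dual_norm_ub | exact: tmu].
Qed.

Lemma norm_sublinear : sublinear (fun f : V => `|f|).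
Proof.
split; first by move=> ? ?; apply: ler_normD.
by move=> a f a_gt0; rewrite normrZ gtr0_norm.
Qed.

Lemma norming_functional (x : V) : exists mu : V -> R,
  [/\ bounded_lfun mu, (forall f, `|mu f| <= `|f|) & mu x = `|x|].
Proof.
have [mu [mu_lin mu_le mu_x]] := hahn_banach x norm_sublinear.
have mu_norm f : `|mu f| <= `|f|.
  rewrite ler_norml mu_le andbT.
  by have := mu_le (- f); rewrite lfunN // normrN; lra.
by exists mu; split => //; split => //; exists 1 => f; rewrite mul1r.
Qed.

End DualNorm.

Section PuncturedLimits.
Variable R : realType.

Lemma cvg_dnbhs0_norm_le (g : R -> R) L M : g @ 0^' --> L ->
  (forall t, t != 0 -> `|g t| <= M) -> `|L| <= M.
Proof.
move=> gL gM; rewrite -(cvg_lim (@Rhausdorff R) (cvg_norm gL)).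
apply: limr_le; first exact: cvgP (cvg_norm gL).
by near=> t; apply: gM; near: t; exact: nbhs_dnbhs_neq.
Unshelve. all: by end_near. Qed.

Lemma cvg_dnbhs0_sides (g : R -> R) L a : g @ 0^' --> L ->
  (forall t, 0 < t -> a <= g t) -> (forall t, t < 0 -> g t <= a) -> L = a.
Proof.
move=> gL g_right g_left.
have gL_right : g @ 0^'+ --> L.
  by apply: cvg_trans gL; apply: cvg_app; apply: within_subset => t /= /gt_eqF->.
have gL_left : g @ 0^'- --> L.
  by apply: cvg_trans gL; apply: cvg_app; apply: within_subset => t /= /lt_eqF->.
apply/eqP; rewrite eq_le; apply/andP; split.
- rewrite -(cvg_lim (@Rhausdorff R) gL_left); apply: limr_le.
    exact: cvgP gL_left.
  by near=> t; apply: g_left; near: t; exact: nbhs_left_lt.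
- rewrite -(cvg_lim (@Rhausdorff R) gL_right); apply: limr_ge.
    exact: cvgP gL_right.
  by near=> t; apply: g_right; near: t; exact: nbhs_right_gt.
Unshelve. all: by end_near. Qed.

End PuncturedLimits.

Section GateauxDerivative.
Variables (R : realType) (V : normedModType R).

Lemma dquot_bound (nu mu : V -> R) t : bounded_lfun nu -> bounded_lfun mu ->
  t != 0 -> `|dquot nu mu t| <= dnorm mu.
Proof.
move=> nu_bd mu_bd t_neq0.
rewrite /dquot normrM normfV ler_pdivrMr ?normr_gt0 // mulrC.
exact: dual_norm_lipschitz.
Qed.

Lemma gateaux_dual_bound (nu mu : V -> R) : bounded_lfun nu ->
  bounded_lfun mu -> (nu <> (fun=> 0) -> cvg (dquot nu mu @ (0 : R)^')) ->
  `|gateaux_dual nu mu| <= dnorm mu.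
Proof.
move=> nu_bd mu_bd nu_cvg; rewrite /gateaux_dual.
destruct (pselect (nu = fun=> 0)) as [nu0|nu_neq0] => /=.
  by rewrite normr0 dual_norm_ge0.
by apply: (cvg_dnbhs0_norm_le (nu_cvg nu_neq0)) => t; exact: dquot_bound.
Qed.

(* In its own direction the dual norm has derivative [dnorm nu], since
   [dnorm ((1 + t) nu) = (1 + t) dnorm nu] for [|t| < 1]. *)
Lemma gateaux_dual_self (nu : V -> R) : bounded_lfun nu ->
  gateaux_dual nu nu = dnorm nu.
Proof.
move=> nu_bd; rewrite /gateaux_dual.
destruct (pselect (nu = fun=> 0)) as [nu0|nu_neq0].
  apply/esym/eqP; rewrite eq_le dual_norm_ge0 andbT nu0.
  by apply: dual_norm_le => // f; rewrite normr0 mul0r.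
apply: lim_near_cst => //; near=> t.
have t_small : `|t| < 1 by near: t; exact: dnbhs0_lt.
have t_neq0 : t != 0 by near: t; exact: nbhs_dnbhs_neq.
rewrite /dquot.
have -> : (fun f => nu f + t * nu f) = (fun f => (1 + t) * nu f).
  by apply: funext => f; ring.
rewrite dual_norm_scale // ger0_norm; last by move: t_small => /ltr_normlP[]; lra.
by field.
Unshelve. all: by end_near. Qed.

(* If [x] is normed by [nu], then the derivative of the dual norm at [nu]
   evaluates functionals at [x / |x|]: the difference quotients are
   [>= mu x / |x|] for [t > 0] and [<= mu x / |x|] for [t < 0]. *)
Lemma gateaux_dual_normed (nu mu : V -> R) (x : V) : bounded_lfun nu ->
  bounded_lfun mu -> nu <> (fun=> 0) -> cvg (dquot nu mu @ (0 : R)^') ->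
  0 < `|x| -> nu x = dnorm nu * `|x| -> gateaux_dual nu mu = mu x / `|x|.
Proof.
move=> nu_bd mu_bd nu_neq0 nu_cvg x_gt0 nu_x; rewrite /gateaux_dual.
destruct (pselect (nu = fun=> 0)) as [nu0|nu_neq0'] => /=; first by case: nu_neq0.
have dnorm_incr t : t * (mu x / `|x|) <= dnorm (fun f => nu f + t * mu f) - dnorm nu.
  have := dual_norm_ub x (bounded_shift t nu_bd mu_bd).
  move=> /(le_trans (ler_norm _)) shift_ub.
  rewrite -(ler_pM2r x_gt0) mulrBl -nu_x.
  have -> : t * (mu x / `|x|) * `|x| = t * mu x by field; rewrite gt_eqF.
  lra.
apply: (cvg_dnbhs0_sides nu_cvg) => t t_sgn.
- by rewrite /dquot ler_pdivlMr // mulrC.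
- by rewrite /dquot ler_ndivrMr // mulrC.
Qed.

End GateauxDerivative.

Section MinNormInterpolation.
Variables (R : realType) (V : normedModType R) (m : nat).
Variables (nu : 'I_m -> V -> R) (y : 'I_m -> R).
Hypothesis nu_bd : forall j, bounded_lfun (nu j).

Let nu_lin j : linear_functional (nu j) := (nu_bd j).1.

Lemma smooth_dquot_cvg (mu lambda : V -> R) : dual_smooth V ->
  bounded_lfun mu -> bounded_lfun lambda -> mu <> (fun=> 0) ->
  cvg (dquot mu lambda @ (0 : R)^').
Proof.
by move=> smooth /is_dualP mu_dual /is_dualP lambda_dual mu_neq0; exact: smooth.
Qed.

Definition kernel_cone : set (V * R) :=
  [set p | (forall j, nu j p.1 = 0) /\ p.2 = 0].

(* The quotient seminorm [x |-> dist (x, kernel)]. *)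
Definition quotient_norm : V -> R := cone_inf (fun f => `|f|) kernel_cone.

Let kernel_cone0 : kernel_cone (0, 0).
Proof. by split => // j; rewrite lfun0. Qed.

Let kernel_coneD z1 s1 z2 s2 : kernel_cone (z1, s1) -> kernel_cone (z2, s2) ->
  kernel_cone (z1 + z2, s1 + s2).
Proof.
move=> [/= z1_ker ->] [/= z2_ker ->]; split; rewrite ?addr0 // => j.
by rewrite lfunD // z1_ker z2_ker addr0.
Qed.

Let kernel_coneZ a z s : 0 < a -> kernel_cone (z, s) ->
  kernel_cone (a *: z, a * s).
Proof.
move=> _ [/= z_ker ->]; split; rewrite ?mulr0 // => j.
by rewrite lfunZ // z_ker mulr0.
Qed.

Let kernel_cone_le z s : kernel_cone (z, s) -> s <= `|z|.
Proof. by move=> [_ /= ->]. Qed.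

Lemma quotient_norm_sublinear : sublinear quotient_norm.
Proof.
exact: cone_inf_sublinear (norm_sublinear V) kernel_cone0 kernel_coneD
  kernel_coneZ kernel_cone_le.
Qed.

Lemma quotient_norm_le x : quotient_norm x <= `|x|.
Proof. exact: cone_inf_le_q (norm_sublinear V) kernel_cone0 kernel_cone_le x. Qed.

Lemma quotient_norm_kernel f : (forall j, nu j f = 0) -> quotient_norm f <= 0.
Proof.
move=> f_ker; rewrite -oppr0 -[f]opprK.
apply: cone_inf_opp (norm_sublinear V) kernel_cone_le _ _ _.
by split => //= j; rewrite lfunN // f_ker oppr0.
Qed.

Lemma quotient_norm_min_interp fhat : is_min_norm_interp nu y fhat ->
  quotient_norm fhat = `|fhat|.
Proof.
move=> [fhat_interp fhat_min]; apply/eqP; rewrite eq_le quotient_norm_le /=.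
apply: (cone_inf_ge kernel_cone0) => z s [z_ker /= ->]; rewrite subr0 fhat_min.
apply: ge_inf; first by exists 0 => _ [f _ <-].
by exists (fhat + z) => // j; rewrite lfunD // z_ker addr0 fhat_interp.
Qed.

Lemma min_interp_norming fhat : is_min_norm_interp nu y fhat ->
  exists mu : V -> R, [/\ bounded_lfun mu, (forall f, `|mu f| <= `|f|),
    mu fhat = `|fhat| & forall f, (forall j, nu j f = 0) -> mu f = 0].
Proof.
move=> fhat_min.
have [mu [mu_lin mu_le mu_fhat]] := hahn_banach fhat quotient_norm_sublinear.
have mu_norm f : `|mu f| <= `|f|.
  have mu_le_norm g : mu g <= `|g| := le_trans (mu_le g) (quotient_norm_le g).
  rewrite ler_norml mu_le_norm andbT.
  by have := mu_le_norm (- f); rewrite lfunN // normrN; lra.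
exists mu; split => //.
- by split => //; exists 1 => f; rewrite mul1r.
- by rewrite mu_fhat quotient_norm_min_interp.
- move=> f f_ker; apply/eqP; rewrite eq_le.
  have ker_le g : (forall j, nu j g = 0) -> mu g <= 0.
    by move=> g_ker; exact: le_trans (mu_le g) (quotient_norm_kernel g_ker).
  rewrite ker_le //=; have := ker_le (- f); rewrite lfunN // oppr_le0; apply.
  by move=> j; rewrite lfunN // f_ker oppr0.
Qed.

Lemma norming_dual_norm (mu : V -> R) x : bounded_lfun mu ->
  (forall f, `|mu f| <= `|f|) -> mu x = `|x| -> x != 0 -> dnorm mu = 1.
Proof.
move=> mu_bd mu_norm mu_x x_neq0; have x_gt0 : 0 < `|x| by rewrite normr_gt0.
have mu_le1 : dnorm mu <= 1 by apply: dual_norm_le => // f; rewrite mul1r.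
apply/eqP; rewrite eq_le mu_le1 /=.
have := dual_norm_ub x mu_bd; rewrite mu_x normr_id => x_le.
by rewrite -(ler_pM2r x_gt0) mul1r.
Qed.

(* Necessity: a minimum norm interpolant is [rho G*(sum c_j nu_j)], with the
   coefficients of [|fhat| mu] for the norming functional [mu] above. *)
Lemma min_interp_gateaux fhat : dual_smooth V -> is_min_norm_interp nu y fhat ->
  exists c : 'I_m -> R, forall mu : V -> R, is_dual mu ->
    mu fhat = dnorm (lincomb c nu) * gateaux_dual (lincomb c nu) mu.
Proof.
move=> smooth fhat_min.
have [mu0 [mu0_bd mu0_norm mu0_fhat mu0_ker]] := min_interp_norming fhat_min.
have [c mu0E] := common_kernel_span nu_lin mu0_bd.1 mu0_ker.
exists (fun j => `|fhat| * c j) => mu /is_dualP mu_bd.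
have -> : lincomb (fun j => `|fhat| * c j) nu = (fun f => `|fhat| * mu0 f).
  apply: funext => f; rewrite /lincomb mu0E mulr_sumr.
  by apply: eq_bigr => j _; rewrite mulrA.
rewrite dual_norm_scale // normr_id.
have [->|fhat_neq0] := eqVneq fhat 0.
  by rewrite normr0 !mul0r lfun0 //; exact: mu_bd.1.
have fhat_gt0 : 0 < `|fhat| by rewrite normr_gt0.
have mu0_1 := norming_dual_norm mu0_bd mu0_norm mu0_fhat fhat_neq0.
have nuh_bd := bounded_scale `|fhat| mu0_bd.
have nuh_neq0 : (fun f => `|fhat| * mu0 f) <> (fun=> 0).
  move=> /(congr1 (fun g => g fhat)) /=; rewrite mu0_fhat.
  by move=> /eqP; rewrite mulf_eq0 orbb gt_eqF.
have nuh_fhat : `|fhat| * mu0 fhat = dnorm (fun f => `|fhat| * mu0 f) * `|fhat|.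
  by rewrite dual_norm_scale // mu0_1 normr_id mulr1 mu0_fhat.
rewrite (gateaux_dual_normed nuh_bd mu_bd nuh_neq0 _ fhat_gt0 nuh_fhat) //.
  by rewrite mu0_1 mulr1; field; rewrite gt_eqF.
exact: smooth_dquot_cvg.
Qed.

Lemma min_norm_interpP fhat : interp_set nu y fhat ->
  (forall f, interp_set nu y f -> `|fhat| <= `|f|) -> is_min_norm_interp nu y fhat.
Proof.
move=> fhat_interp fhat_le; split => //; apply/eqP; rewrite eq_le; apply/andP; split.
- apply: lb_le_inf; first by exists `|fhat|, fhat.
  by move=> _ [f f_interp <-]; exact: fhat_le.
- by apply: ge_inf; [exists 0 => _ [f _ <-] | exists fhat].
Qed.

(* Sufficiency: with [nuc = sum c_j nu_j] and [rho = dnorm nuc], testing the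
   representation on [nuc] gives [nuc fhat = rho^2], and on a functional
   norming [fhat] gives [|fhat| <= rho]; hence [rho^2 = nuc f <= rho |f|] for
   every interpolant [f]. *)
Lemma gateaux_min_interp fhat : dual_smooth V -> interp_set nu y fhat ->
  (exists c : 'I_m -> R, forall mu : V -> R, is_dual mu ->
    mu fhat = dnorm (lincomb c nu) * gateaux_dual (lincomb c nu) mu) ->
  is_min_norm_interp nu y fhat.
Proof.
move=> smooth fhat_interp [c fhatE]; set nuc := lincomb c nu in fhatE.
have nuc_bd : bounded_lfun nuc := bounded_lincomb c nu_bd.
have rho_ge0 : 0 <= dnorm nuc := dual_norm_ge0 nuc.
have [mu1 [mu1_bd mu1_norm mu1_fhat]] := norming_functional fhat.
have fhat_le_rho : `|fhat| <= dnorm nuc.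
  rewrite -mu1_fhat fhatE; last exact/is_dualP.
  apply: le_trans (ler_norm _) _; rewrite normrM ger0_norm // ler_piMr //.
  apply: le_trans (gateaux_dual_bound nuc_bd mu1_bd _) _.
    by move=> nuc_neq0; exact: smooth_dquot_cvg.
  by apply: dual_norm_le => // f; rewrite mul1r.
have nuc_fhat : nuc fhat = dnorm nuc * dnorm nuc.
  by rewrite fhatE ?gateaux_dual_self //; exact/is_dualP.
apply: min_norm_interpP => // f f_interp.
have nuc_f : nuc f = nuc fhat.
  by apply: eq_bigr => j _; rewrite f_interp fhat_interp.
have := le_trans (ler_norm _) (dual_norm_ub f nuc_bd); rewrite nuc_f nuc_fhat.
move: rho_ge0; rewrite le_eqVlt => /orP[/eqP rho0|rho_gt0].
  by rewrite -rho0 in fhat_le_rho; have := normr_ge0 f; lra.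
by rewrite ler_pM2l // => rho_le; exact: le_trans fhat_le_rho rho_le.
Qed.

End MinNormInterpolation.

Theorem mainTheorem6 (R : realType) (B : completeNormedModType R) (m : nat)
  (nu : 'I_m -> B -> R) (y : 'I_m -> R) (fhat : B) :
  dual_smooth B ->
  (forall j, is_dual (nu j)) ->
  lin_indep nu ->
  is_min_norm_interp nu y fhat <->
  (interp_set nu y fhat /\
   exists c : 'I_m -> R,
     forall mu : B -> R, is_dual mu ->
       mu fhat = dnorm (lincomb c nu) * gateaux_dual (lincomb c nu) mu).
Proof.
move=> smooth nu_dual _.
have nu_bd j : bounded_lfun (nu j) by apply/is_dualP.
split=> [fhat_min|[fhat_interp fhatE]].
- split; first exact: fhat_min.1.
  exact: (min_interp_gateaux nu_bd smooth fhat_min).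
- exact: (gateaux_min_interp nu_bd smooth fhat_interp fhatE).
Qed.
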